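(* (Σ-completeness of $\mathsf{WSeq}$.) For every $\Sigma$-sentence $\phi$ of $\mathcal{L}$, if $\mathfrak{S}\models\phi$ then $\mathsf{WSeq}\vdash\phi$.
   Context: $\mathcal{L}$ is the first-order language $\{e, \vdash, \circ\}$ with $e$ a constant symbol and $\vdash$ (written infix), $\circ$ binary function symbols. Sequences: $()$ is a sequence, and for $n>0$, if $s_1,\ldots,s_n$ are sequences then $(s_1,\ldots,s_n)$ is a sequence. The standard structure $\mathfrak{S}$ has universe all sequences, $e^{\mathfrak{S}}=()$, $(s_1,\ldots,s_n)\vdash^{\mathfrak{S}} t=(s_1,\ldots,s_n,t)$, and $\circ^{\mathfrak{S}}$ is concatenation of sequences. The sequeral $\overline{s}$ of a sequence is the term with $\overline{()}=e$ and $\overline{(s_1,\ldots,s_n)}=(\ldots((e\vdash\overline{s_1})\vdash\overline{s_2})\ldots)\vdash\overline{s_n}$. For terms $t_1,t_2$, $t_1\sqsubseteq t_2$ abbreviates $\exists y[t_1\circ y=t_2]$, $t_1\not\sqsubseteq t_2$ abbreviates its negation, and $\forall x\sqsubseteq t[\phi]$ abbreviates $\forall x[x\sqsubseteq t\rightarrow\phi]$. The $\Sigma$-formulas are defined inductively: atomic formulas and negations of atomic formulas; $s\sqsubseteq t$ and $s\not\sqsubseteq t$ for terms $s,t$; $\alpha\wedge\beta$ and $\alpha\vee\beta$ for $\Sigma$-formulas $\alpha,\beta$; $\exists x[\phi]$ for a $\Sigma$-formula $\phi$; and $\forall x\sqsubseteq t[\phi]$ for a $\Sigma$-formula $\phi$,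 variable $x$ and term $t$ not containing $x$. The theory $\mathsf{WSeq}$ has the axiom schemes: ($\mathsf{WSeq}_1$) $\overline{s}\neq\overline{t}$ for all distinct sequences $s,t$; ($\mathsf{WSeq}_2$) $\overline{(s_1,\ldots,s_n)}\circ\overline{(t_1,\ldots,t_m)}=\overline{(s_1,\ldots,s_n,t_1,\ldots,t_m)}$ for all sequences; ($\mathsf{WSeq}_3$) $\forall x[x\sqsubseteq\overline{s}\rightarrow\bigvee_{t\in I(s)}x=\overline{t}]$ for every sequence $s$, where $I(s)$ is the set of all initial segments of $s$ (including $()$ and $s$). *)

From Stdlib Require Import List Arith.
Import ListNotations.

Inductive sq : Type := mk : list sq -> sq.

Definition sq_nil : sq := mk [].
Definition sq_snoc (s t : sq) : sq := match s with mk l => mk (l ++ [t]) end.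
Definition sq_cat (s t : sq) : sq :=
  match s, t with mk l1, mk l2 => mk (l1 ++ l2) end.

Inductive term : Type :=
| Tvar : nat -> term
| Te : term
| Tsnoc : term -> term -> term   (* t1 |- t2 *)
| Tcat : term -> term -> term.   (* t1 o t2 *)

Inductive form : Type :=
| Eq : term -> term -> form
| Bot : form
| Imp : form -> form -> form
| And : form -> form -> form
| Or : form -> form -> form
| All : form -> form
| Ex : form -> form.

Definition Neg (p : form) : form := Imp p Bot.

Fixpoint tsubst (s : nat -> term) (t : term) : term :=
  match t with
  | Tvar n => s n
  | Te => Te
  | Tsnoc a b => Tsnoc (tsubst s a) (tsubst s b)
  | Tcat a b => Tcat (tsubst s a) (tsubst s b)
  end.

Definition tlift (t : term) : term := tsubst (fun k => Tvar (S k)) t.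

Definition up (s : nat -> term) : nat -> term :=
  fun n => match n with 0 => Tvar 0 | S k => tlift (s k) end.

Fixpoint fsubst (s : nat -> term) (p : form) : form :=
  match p with
  | Eq a b => Eq (tsubst s a) (tsubst s b)
  | Bot => Bot
  | Imp a b => Imp (fsubst s a) (fsubst s b)
  | And a b => And (fsubst s a) (fsubst s b)
  | Or a b => Or (fsubst s a) (fsubst s b)
  | All a => All (fsubst (up s) a)
  | Ex a => Ex (fsubst (up s) a)
  end.

Definition flift (p : form) : form := fsubst (fun k => Tvar (S k)) p.

Definition scons {A : Type} (x : A) (f : nat -> A) : nat -> A :=
  fun n => match n with 0 => x | S k => f k end.

Definition inst (p : form) (t : term) : form := fsubst (scons t Tvar) p.

Fixpoint tclosed (n : nat) (t : term) : Prop :=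
  match t with
  | Tvar k => k < n
  | Te => True
  | Tsnoc a b | Tcat a b => tclosed n a /\ tclosed n b
  end.

Fixpoint fclosed (n : nat) (p : form) : Prop :=
  match p with
  | Eq a b => tclosed n a /\ tclosed n b
  | Bot => True
  | Imp a b | And a b | Or a b => fclosed n a /\ fclosed n b
  | All a | Ex a => fclosed (S n) a
  end.

Definition sentence (p : form) : Prop := fclosed 0 p.

Definition Sub (t1 t2 : term) : form :=
  Ex (Eq (Tcat (tlift t1) (Tvar 0)) (tlift t2)).
(* forall x ⊑ t [p]  :=  forall x [x ⊑ t -> p]   (x = Tvar 0, t does not mention x) *)
Definition BAll (t : term) (p : form) : form :=
  All (Imp (Sub (Tvar 0) (tlift t)) p).

Inductive Sigma : form -> Prop :=
| S_eq : forall s t, Sigma (Eq s t)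
| S_neq : forall s t, Sigma (Neg (Eq s t))
| S_sub : forall s t, Sigma (Sub s t)
| S_nsub : forall s t, Sigma (Neg (Sub s t))
| S_and : forall a b, Sigma a -> Sigma b -> Sigma (And a b)
| S_or : forall a b, Sigma a -> Sigma b -> Sigma (Or a b)
| S_ex : forall a, Sigma a -> Sigma (Ex a)
| S_ball : forall t a, Sigma a -> Sigma (BAll t a).

Fixpoint teval (rho : nat -> sq) (t : term) : sq :=
  match t with
  | Tvar n => rho n
  | Te => sq_nil
  | Tsnoc a b => sq_snoc (teval rho a) (teval rho b)
  | Tcat a b => sq_cat (teval rho a) (teval rho b)
  end.

Fixpoint sat (rho : nat -> sq) (p : form) : Prop :=
  match p with
  | Eq a b => teval rho a = teval rho b
  | Bot => False
  | Imp a b => sat rho a -> sat rho b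
  | And a b => sat rho a /\ sat rho b
  | Or a b => sat rho a \/ sat rho b
  | All a => forall d : sq, sat (scons d rho) a
  | Ex a => exists d : sq, sat (scons d rho) a
  end.

Definition models_S (p : form) : Prop := forall rho, sat rho p.

Fixpoint seqr (s : sq) : term :=
  match s with
  | mk l =>
      (fix go (acc : term) (l : list sq) : term :=
         match l with
         | [] => acc
         | x :: r => go (Tsnoc acc (seqr x)) r
         end) Te l
  end.

Fixpoint bigOr (l : list form) : form :=
  match l with
  | [] => Bot
  | [x] => x
  | x :: r => Or x (bigOr r)
  end.

Definition inits {A : Type} (l : list A) : list (list A) :=
  map (fun k => firstn k l) (seq 0 (S (length l))).

Inductive WSeq_ax : form -> Prop :=
| WSeq1 : forall s t, s <> t -> WSeq_ax (Neg (Eq (seqr s) (seqr t)))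
| WSeq2 : forall l1 l2,
    WSeq_ax (Eq (Tcat (seqr (mk l1)) (seqr (mk l2))) (seqr (mk (l1 ++ l2))))
| WSeq3 : forall l,
    WSeq_ax (All (Imp (Sub (Tvar 0) (tlift (seqr (mk l))))
                      (bigOr (map (fun i => Eq (Tvar 0) (tlift (seqr (mk i))))
                                  (inits l))))).

Inductive nd : list form -> form -> Prop :=
| nd_ax : forall G p, In p G -> nd G p
| nd_raa : forall G p, nd (Neg p :: G) Bot -> nd G p
| nd_impI : forall G p q, nd (p :: G) q -> nd G (Imp p q)
| nd_impE : forall G p q, nd G (Imp p q) -> nd G p -> nd G q
| nd_andI : forall G p q, nd G p -> nd G q -> nd G (And p q)
| nd_andE1 : forall G p q, nd G (And p q) -> nd G p
| nd_andE2 : forall G p q, nd G (And p q) -> nd G q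
| nd_orI1 : forall G p q, nd G p -> nd G (Or p q)
| nd_orI2 : forall G p q, nd G q -> nd G (Or p q)
| nd_orE : forall G p q r, nd G (Or p q) -> nd (p :: G) r -> nd (q :: G) r -> nd G r
| nd_allI : forall G p, nd (map flift G) p -> nd G (All p)
| nd_allE : forall G p t, nd G (All p) -> nd G (inst p t)
| nd_exI : forall G p t, nd G (inst p t) -> nd G (Ex p)
| nd_exE : forall G p q, nd G (Ex p) -> nd (p :: map flift G) (flift q) -> nd G q
| nd_refl : forall G t, nd G (Eq t t)
| nd_leib : forall G p s t, nd G (Eq s t) -> nd G (inst p s) -> nd G (inst p t).

Definition WSeq_proves (p : form) : Prop :=
  exists G, Forall WSeq_ax G /\ nd G p.

(* The stronger statement proved, by induction on Sigma-formulas, is that every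
   true instance of a Sigma-formula, obtained by substituting sequerals for its
   free variables, is provable in WSeq.  Closed terms are provably equal to the
   sequeral of their value (|- is literally sequeral syntax, and WSeq2 computes
   concatenation), so the atomic cases come down to sequerals: equalities are
   reflexivity, disequalities are WSeq1, [s ⊑ t] is witnessed by WSeq2, and
   [s ⋢ t] follows from WSeq3, which lists the finitely many candidates, each
   refuted by WSeq1.  For a bounded quantifier, WSeq3 likewise reduces
   [forall x ⊑ t] to finitely many instances [x = i], each true and hence
   provable by induction. *)

From Stdlib Require Import List Arith Lia.
Import ListNotations.

Lemma tsubst_ext s s' t : (forall n, s n = s' n) -> tsubst s t = tsubst s' t.
Proof. intros; induction t; simpl; f_equal; auto. Qed.

Lemma tsubst_comp s s' t :
  tsubst s (tsubst s' t) = tsubst (fun n => tsubst s (s' n)) t.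
Proof. induction t; simpl; f_equal; auto. Qed.

Lemma tsubst_id t : tsubst Tvar t = t.
Proof. induction t; simpl; f_equal; auto. Qed.

Lemma tsubst_closed n s t :
  tclosed n t -> (forall k, k < n -> s k = Tvar k) -> tsubst s t = t.
Proof. induction t; simpl; intros; try f_equal; intuition auto. Qed.

Lemma tsubst_scons_tlift u t : tsubst (scons u Tvar) (tlift t) = t.
Proof. unfold tlift. rewrite tsubst_comp. apply tsubst_id. Qed.

Lemma tsubst_up_tlift s t : tsubst (up s) (tlift t) = tlift (tsubst s t).
Proof. unfold tlift. rewrite !tsubst_comp. reflexivity. Qed.

Lemma up_ext s s' : (forall n, s n = s' n) -> forall n, up s n = up s' n.
Proof. intros H [|n]; simpl; rewrite ?H; reflexivity. Qed.

Lemma up_comp s s' n :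
  tsubst (up s) (up s' n) = up (fun k => tsubst s (s' k)) n.
Proof. destruct n; simpl; [reflexivity | apply tsubst_up_tlift]. Qed.

Lemma fsubst_ext p : forall s s', (forall n, s n = s' n) -> fsubst s p = fsubst s' p.
Proof. induction p; intros; simpl; f_equal; auto using tsubst_ext, up_ext. Qed.

Lemma fsubst_comp p : forall s s',
  fsubst s (fsubst s' p) = fsubst (fun n => tsubst s (s' n)) p.
Proof.
  induction p; intros; simpl; f_equal; auto using tsubst_comp;
    rewrite IHp; apply fsubst_ext, up_comp.
Qed.

Lemma fsubst_closed p : forall n s,
  fclosed n p -> (forall k, k < n -> s k = Tvar k) -> fsubst s p = p.
Proof.
  induction p; simpl; intros n s Hp Hs; try f_equal;
    intuition eauto using tsubst_closed;
    apply (IHp (S n)); auto; intros [|k] Hk; simpl; rewrite ?Hs by lia; reflexivity.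
Qed.

Lemma inst_up s p u : inst (fsubst (up s) p) u = fsubst (scons u s) p.
Proof.
  unfold inst. rewrite fsubst_comp. apply fsubst_ext.
  intros [|n]; [reflexivity | apply tsubst_scons_tlift].
Qed.

Lemma fsubst_Sub s a b : fsubst s (Sub a b) = Sub (tsubst s a) (tsubst s b).
Proof. unfold Sub. simpl. rewrite !tsubst_up_tlift. reflexivity. Qed.

Lemma fsubst_BAll s t p : fsubst s (BAll t p) = BAll (tsubst s t) (fsubst (up s) p).
Proof. unfold BAll. cbn [fsubst]. rewrite fsubst_Sub, tsubst_up_tlift. reflexivity. Qed.

Lemma fsubst_bigOr s l : fsubst s (bigOr l) = bigOr (map (fsubst s) l).
Proof. induction l as [|p [|q l] IH]; simpl in *; rewrite ?IH; reflexivity. Qed.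
Fixpoint seqr_from (acc : term) (l : list sq) : term :=
  match l with [] => acc | x :: r => seqr_from (Tsnoc acc (seqr x)) r end.

Lemma seqr_mk l : seqr (mk l) = seqr_from Te l.
Proof. reflexivity. Qed.

Fixpoint sq_nested_ind (P : sq -> Prop) (IH : forall l, Forall P l -> P (mk l))
  (s : sq) : P s :=
  match s with
  | mk l => IH l ((fix all (l : list sq) : Forall P l :=
                     match l with
                     | [] => Forall_nil _
                     | x :: r => Forall_cons _ (sq_nested_ind P IH x) (all r)
                     end) l)
  end.

Lemma tsubst_seqr s x : tsubst s (seqr x) = seqr x.
Proof.
  induction x as [l Hl] using sq_nested_ind. rewrite seqr_mk.
  assert (Hacc : tsubst s Te = Te) by reflexivity. revert Hacc.
  generalize Te. induction Hl as [|y l Hy _ IH]; intros acc Hacc; simpl; auto.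
  apply IH. simpl. rewrite Hacc, Hy. reflexivity.
Qed.

Lemma seqr_snoc x y : seqr (sq_snoc x y) = Tsnoc (seqr x) (seqr y).
Proof.
  destruct x as [l]. simpl sq_snoc. rewrite !seqr_mk. generalize Te.
  induction l; simpl; auto.
Qed.

Definition seqr_env (rho : nat -> sq) : nat -> term := fun n => seqr (rho n).

Lemma tsubst_seqr_env s rho t :
  tsubst s (tsubst (seqr_env rho) t) = tsubst (seqr_env rho) t.
Proof. rewrite tsubst_comp. apply tsubst_ext. intro. apply tsubst_seqr. Qed.

Lemma fsubst_seqr_env s rho p :
  fsubst s (fsubst (seqr_env rho) p) = fsubst (seqr_env rho) p.
Proof. rewrite fsubst_comp. apply fsubst_ext. intro. apply tsubst_seqr. Qed.

Lemma scons_seqr_env d rho p :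
  fsubst (scons (seqr d) (seqr_env rho)) p = fsubst (seqr_env (scons d rho)) p.
Proof. apply fsubst_ext. intros [|n]; reflexivity. Qed.

Lemma up_seqr_env rho p :
  fsubst (up (seqr_env rho)) p = fsubst (scons (Tvar 0) (seqr_env rho)) p.
Proof. apply fsubst_ext. intros [|n]; [reflexivity | apply tsubst_seqr]. Qed.

Lemma in_inits {A : Type} (l i : list A) : In i (inits l) <-> exists r, i ++ r = l.
Proof.
  unfold inits. rewrite in_map_iff. split.
  - intros [k [<- _]]. exists (skipn k l). apply firstn_skipn.
  - intros [r <-]. exists (length i). split.
    + rewrite firstn_app, Nat.sub_diag, firstn_O, app_nil_r, firstn_all. reflexivity.
    + apply in_seq. rewrite length_app. lia.
Qed.

Lemma teval_subst rho s t : teval rho (tsubst s t) = teval (fun n => teval rho (s n)) t.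
Proof. induction t; simpl; f_equal; auto. Qed.

Lemma teval_tlift d rho t : teval (scons d rho) (tlift t) = teval rho t.
Proof. unfold tlift. rewrite teval_subst. reflexivity. Qed.

Lemma sat_Sub rho a b :
  sat rho (Sub a b) <-> exists d, sq_cat (teval rho a) d = teval rho b.
Proof.
  unfold Sub. cbn [sat teval].
  split; intros [d H]; exists d; rewrite !teval_tlift in *; exact H.
Qed.

Lemma incl_cons_cons {A : Type} (a : A) l l' : incl l l' -> incl (a :: l) (a :: l').
Proof. intro H. apply incl_cons; [apply in_eq | apply incl_tl, H]. Qed.

Lemma nd_weaken G p : nd G p -> forall G', incl G G' -> nd G' p.
Proof.
  induction 1; intros G' HG.
  all: solve [econstructor; eauto using incl_cons_cons, incl_map].
Qed.

Lemma nd_cons G q p : nd G p -> nd (q :: G) p.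
Proof. intro H. apply (nd_weaken G); [exact H | apply incl_tl, incl_refl]. Qed.

Lemma nd_hyp G p : nd (p :: G) p.
Proof. apply nd_ax, in_eq. Qed.

Lemma nd_rewrite G p s t a b :
  inst p s = a -> inst p t = b -> nd G (Eq s t) -> nd G a -> nd G b.
Proof. intros <- <-. apply nd_leib. Qed.

Ltac inst_eq :=
  unfold inst; cbn [fsubst tsubst scons]; rewrite ?fsubst_Sub;
  cbn [tsubst scons]; rewrite ?tsubst_scons_tlift; reflexivity.

Lemma nd_sym G s t : nd G (Eq s t) -> nd G (Eq t s).
Proof.
  intro H. apply (nd_rewrite G (Eq (Tvar 0) (tlift s)) s t (Eq s s));
    auto using nd_refl; inst_eq.
Qed.

Lemma nd_trans G s t u : nd G (Eq s t) -> nd G (Eq t u) -> nd G (Eq s u).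
Proof.
  intros H1 H2. apply (nd_rewrite G (Eq (tlift s) (Tvar 0)) t u (Eq s t)); auto; inst_eq.
Qed.

Lemma nd_congr_Tsnoc G a a' b b' :
  nd G (Eq a a') -> nd G (Eq b b') -> nd G (Eq (Tsnoc a b) (Tsnoc a' b')).
Proof.
  intros Ha Hb.
  apply (nd_rewrite G (Eq (Tsnoc (tlift a) (tlift b)) (Tsnoc (tlift a') (Tvar 0)))
           b b' (Eq (Tsnoc a b) (Tsnoc a' b))); auto; try inst_eq.
  apply (nd_rewrite G (Eq (Tsnoc (tlift a) (tlift b)) (Tsnoc (Tvar 0) (tlift b)))
           a a' (Eq (Tsnoc a b) (Tsnoc a b))); auto using nd_refl; inst_eq.
Qed.

Lemma nd_congr_Tcat G a a' b b' :
  nd G (Eq a a') -> nd G (Eq b b') -> nd G (Eq (Tcat a b) (Tcat a' b')).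
Proof.
  intros Ha Hb.
  apply (nd_rewrite G (Eq (Tcat (tlift a) (tlift b)) (Tcat (tlift a') (Tvar 0)))
           b b' (Eq (Tcat a b) (Tcat a' b))); auto; try inst_eq.
  apply (nd_rewrite G (Eq (Tcat (tlift a) (tlift b)) (Tcat (Tvar 0) (tlift b)))
           a a' (Eq (Tcat a b) (Tcat a b))); auto using nd_refl; inst_eq.
Qed.

Definition nd_congruent (P : term -> term -> form) : Prop :=
  forall G s s' t t',
    nd G (Eq s s') -> nd G (Eq t t') -> nd G (P s t) -> nd G (P s' t').

Lemma nd_congruent_Eq : nd_congruent Eq.
Proof. intros G s s' t t' Hs Ht H. eauto using nd_trans, nd_sym. Qed.

Lemma nd_congruent_Sub : nd_congruent Sub.
Proof.
  intros G s s' t t' Hs Ht H.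
  apply (nd_rewrite G (Sub (tlift s') (Tvar 0)) t t' (Sub s' t)); auto; try inst_eq.
  apply (nd_rewrite G (Sub (Tvar 0) (tlift t)) s s' (Sub s t)); auto; inst_eq.
Qed.

Lemma nd_congruent_Neg P : nd_congruent P -> nd_congruent (fun s t => Neg (P s t)).
Proof.
  intros HP G s s' t t' Hs Ht H. apply nd_impI.
  eapply nd_impE; [apply nd_cons, H |].
  apply (HP _ s' s t' t); auto using nd_hyp, nd_sym, nd_cons.
Qed.

Lemma nd_bigOr_elim l G r :
  nd G (bigOr l) -> (forall q, In q l -> nd (q :: G) r) -> nd G r.
Proof.
  revert G. induction l as [|p [|q l] IH]; intros G H Hcases.
  - apply nd_raa, nd_cons, H.
  - eapply nd_impE; [apply nd_impI, Hcases, in_eq | exact H].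
  - eapply nd_orE; [exact H | apply Hcases, in_eq |].
    apply IH; [apply nd_hyp |].
    intros q' Hq'. apply (nd_weaken (q' :: G)).
    + apply Hcases. right. exact Hq'.
    + apply incl_cons_cons, incl_tl, incl_refl.
Qed.

Lemma nd_allI_invariant G p :
  (forall q, In q G -> flift q = q) -> nd G p -> nd G (All p).
Proof.
  intros HG H. apply nd_allI. rewrite map_ext_in with (g := id) by exact HG.
  rewrite map_id. exact H.
Qed.

Lemma WSeq_proves_ax p : WSeq_ax p -> WSeq_proves p.
Proof. intro H. exists [p]. split; [repeat constructor; exact H | apply nd_hyp]. Qed.

Lemma WSeq_proves_mp p q : WSeq_proves (Imp p q) -> WSeq_proves p -> WSeq_proves q.
Proof.
  intros [G1 [A1 H1]] [G2 [A2 H2]]. exists (G1 ++ G2).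
  split; [apply Forall_app; auto |].
  apply (nd_impE _ p); eapply nd_weaken; eauto using incl_appl, incl_appr, incl_refl.
Qed.

Lemma WSeq_proves_of_nd hyps r :
  Forall WSeq_proves hyps -> nd hyps r -> WSeq_proves r.
Proof.
  intros Hhyps. revert r.
  induction Hhyps as [|h hyps Hh _ IH]; intros r Hr.
  - exists []. auto.
  - apply (WSeq_proves_mp h); [apply IH, nd_impI |]; assumption.
Qed.

Definition inits_axiom (l : list sq) : form :=
  All (Imp (Sub (Tvar 0) (tlift (seqr (mk l))))
           (bigOr (map (fun i => Eq (Tvar 0) (tlift (seqr (mk i)))) (inits l)))).

Lemma inst_inits_axiom u l :
  inst (Imp (Sub (Tvar 0) (tlift (seqr (mk l))))
            (bigOr (map (fun i => Eq (Tvar 0) (tlift (seqr (mk i)))) (inits l)))) u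
  = Imp (Sub u (seqr (mk l))) (bigOr (map (fun i => Eq u (seqr (mk i))) (inits l))).
Proof.
  unfold inst. cbn [fsubst]. rewrite fsubst_Sub, fsubst_bigOr, map_map.
  unfold tlift. rewrite !tsubst_seqr. f_equal. f_equal.
  apply map_ext. intro. cbn [fsubst tsubst scons]. rewrite !tsubst_seqr. reflexivity.
Qed.

Lemma fsubst_WSeq_ax s p : WSeq_ax p -> fsubst s p = p.
Proof.
  destruct 1; cbn [fsubst tsubst Neg]; rewrite ?tsubst_seqr; try reflexivity.
  rewrite fsubst_Sub, fsubst_bigOr, map_map. unfold tlift. rewrite !tsubst_seqr.
  do 3 f_equal. apply map_ext. intro. cbn [fsubst tsubst]. rewrite !tsubst_seqr.
  reflexivity.
Qed.

Lemma nd_inits_elim G u l r :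
  nd G (inits_axiom l) -> nd G (Sub u (seqr (mk l))) ->
  (forall i, In i (inits l) -> nd (Eq u (seqr (mk i)) :: G) r) -> nd G r.
Proof.
  intros Hax Hsub Hcases.
  apply (nd_bigOr_elim (map (fun i => Eq u (seqr (mk i))) (inits l))).
  - eapply nd_impE; [| exact Hsub]. rewrite <- inst_inits_axiom. apply nd_allE, Hax.
  - intros q Hq. apply in_map_iff in Hq. destruct Hq as [i [<- Hi]]. auto.
Qed.

Lemma WSeq_proves_teval rho t :
  WSeq_proves (Eq (tsubst (seqr_env rho) t) (seqr (teval rho t))).
Proof.
  induction t as [n | | a IHa b IHb | a IHa b IHb]; cbn [tsubst teval].
  - exists []. split; [constructor | apply nd_refl].
  - exists []. split; [constructor | apply nd_refl].
  - rewrite seqr_snoc.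
    apply (WSeq_proves_of_nd [Eq (tsubst (seqr_env rho) a) (seqr (teval rho a));
                              Eq (tsubst (seqr_env rho) b) (seqr (teval rho b))]).
    + repeat apply Forall_cons; auto.
    + apply nd_congr_Tsnoc; apply nd_ax; simpl; auto.
  - destruct (teval rho a) as [la], (teval rho b) as [lb].
    apply (WSeq_proves_of_nd [Eq (tsubst (seqr_env rho) a) (seqr (mk la));
                              Eq (tsubst (seqr_env rho) b) (seqr (mk lb));
                              Eq (Tcat (seqr (mk la)) (seqr (mk lb))) (seqr (mk (la ++ lb)))]).
    + repeat apply Forall_cons; auto using WSeq_proves_ax, WSeq2.
    + eapply nd_trans; [apply nd_congr_Tcat |]; apply nd_ax; simpl; auto.
Qed.

Lemma WSeq_proves_congruent P rho s t :
  nd_congruent P ->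
  WSeq_proves (P (seqr (teval rho s)) (seqr (teval rho t))) ->
  WSeq_proves (P (tsubst (seqr_env rho) s) (tsubst (seqr_env rho) t)).
Proof.
  intros HP H.
  apply (WSeq_proves_of_nd [Eq (tsubst (seqr_env rho) s) (seqr (teval rho s));
                            Eq (tsubst (seqr_env rho) t) (seqr (teval rho t));
                            P (seqr (teval rho s)) (seqr (teval rho t))]).
  - repeat apply Forall_cons; auto using WSeq_proves_teval.
  - apply (HP _ (seqr (teval rho s)) _ (seqr (teval rho t))); try apply nd_sym;
      apply nd_ax; simpl; auto.
Qed.

Lemma WSeq_proves_Sub_seqr l d : WSeq_proves (Sub (seqr (mk l)) (seqr (mk (l ++ d)))).
Proof.
  apply (WSeq_proves_of_nd [Eq (Tcat (seqr (mk l)) (seqr (mk d))) (seqr (mk (l ++ d)))]).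
  - repeat apply Forall_cons; auto using WSeq_proves_ax, WSeq2.
  - apply (nd_exI _ _ (seqr (mk d))). unfold inst. cbn [fsubst tsubst scons].
    rewrite !tsubst_scons_tlift. apply nd_hyp.
Qed.

Lemma WSeq_proves_not_Sub_seqr x l :
  (forall i, In i (inits l) -> x <> mk i) ->
  WSeq_proves (Neg (Sub (seqr x) (seqr (mk l)))).
Proof.
  intro Hx.
  apply (WSeq_proves_of_nd
           (inits_axiom l :: map (fun i => Neg (Eq (seqr x) (seqr (mk i)))) (inits l))).
  - apply Forall_cons; [apply WSeq_proves_ax, WSeq3 |].
    apply Forall_map, Forall_forall. intros i Hi. apply WSeq_proves_ax, WSeq1, Hx, Hi.
  - apply nd_impI. apply (nd_inits_elim _ (seqr x) l); [apply nd_cons, nd_hyp | apply nd_hyp |].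
    intros i Hi. eapply nd_impE; [| apply nd_hyp].
    apply nd_ax. do 3 right. apply in_map_iff. exists i. auto.
Qed.

Lemma WSeq_proves_Sigma_instance phi rho :
  Sigma phi -> sat rho phi -> WSeq_proves (fsubst (seqr_env rho) phi).
Proof.
  intros HS. revert rho.
  induction HS as [s t | s t | s t | s t | p q _ IHp _ IHq | p q _ IHp _ IHq
                  | p _ IHp | t p _ IHp]; intros rho Hsat; cbn [fsubst Neg].
  - apply (WSeq_proves_congruent Eq); [exact nd_congruent_Eq |].
    cbn [sat] in Hsat. rewrite Hsat. exists []. split; [constructor | apply nd_refl].
  - apply (WSeq_proves_congruent (fun a b => Neg (Eq a b))).
    + apply nd_congruent_Neg, nd_congruent_Eq.
    + apply WSeq_proves_ax, WSeq1, Hsat.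
  - rewrite fsubst_Sub. apply (WSeq_proves_congruent Sub); [exact nd_congruent_Sub |].
    apply sat_Sub in Hsat as [d <-].
    destruct (teval rho s), d. apply WSeq_proves_Sub_seqr.
  - rewrite fsubst_Sub. apply (WSeq_proves_congruent (fun a b => Neg (Sub a b))).
    + apply nd_congruent_Neg, nd_congruent_Sub.
    + destruct (teval rho t) as [l] eqn:Et. apply WSeq_proves_not_Sub_seqr.
      intros i Hi Hs. apply Hsat, sat_Sub. apply in_inits in Hi as [r Hr].
      exists (mk r). rewrite Hs, Et. simpl. rewrite Hr. reflexivity.
  - destruct Hsat as [Hp Hq].
    apply (WSeq_proves_of_nd [fsubst (seqr_env rho) p; fsubst (seqr_env rho) q]).
    + repeat apply Forall_cons; auto.
    + apply nd_andI; apply nd_ax; simpl; auto.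
  - destruct Hsat as [Hp | Hq].
    + apply (WSeq_proves_of_nd [fsubst (seqr_env rho) p]); auto.
      apply nd_orI1, nd_hyp.
    + apply (WSeq_proves_of_nd [fsubst (seqr_env rho) q]); auto.
      apply nd_orI2, nd_hyp.
  - destruct Hsat as [d Hd].
    apply (WSeq_proves_of_nd [fsubst (seqr_env (scons d rho)) p]); auto.
    apply (nd_exI _ _ (seqr d)). rewrite inst_up, scons_seqr_env. apply nd_hyp.
  - rewrite fsubst_BAll. unfold BAll in Hsat. cbn [sat] in Hsat.
    set (t' := tsubst (seqr_env rho) t).
    destruct (teval rho t) as [l] eqn:Et.
    apply (WSeq_proves_of_nd
             (Eq t' (seqr (mk l)) :: inits_axiom l
                :: map (fun i => fsubst (seqr_env (scons (mk i) rho)) p) (inits l))).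
    + apply Forall_cons; [rewrite <- Et; apply WSeq_proves_teval |].
      apply Forall_cons; [apply WSeq_proves_ax, WSeq3 |].
      apply Forall_map, Forall_forall. intros i Hi. apply IHp, Hsat, sat_Sub.
      apply in_inits in Hi as [r Hr]. exists (mk r).
      rewrite teval_tlift, Et. simpl. rewrite Hr. reflexivity.
    + unfold BAll. apply nd_allI_invariant.
      { intros q [<- | [<- | Hq]]; unfold flift.
        - cbn [fsubst]. unfold t'. rewrite tsubst_seqr_env, tsubst_seqr. reflexivity.
        - apply fsubst_WSeq_ax, WSeq3.
        - apply in_map_iff in Hq as [i [<- _]]. apply fsubst_seqr_env. }
      apply nd_impI. replace (tlift t') with t' by (symmetry; apply tsubst_seqr_env).
      apply (nd_inits_elim _ (Tvar 0) l).
      * apply nd_ax. simpl. auto.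
      * apply (nd_congruent_Sub _ (Tvar 0) _ t'); [apply nd_refl | | apply nd_hyp].
        apply nd_ax. simpl. auto.
      * intros i Hi.
        apply (nd_rewrite _ (fsubst (up (seqr_env rho)) p) (seqr (mk i)) (Tvar 0)
                 (fsubst (seqr_env (scons (mk i) rho)) p)).
        -- rewrite inst_up. apply scons_seqr_env.
        -- rewrite inst_up, up_seqr_env. reflexivity.
        -- apply nd_sym, nd_hyp.
        -- apply nd_ax. do 4 right. apply in_map_iff. exists i. auto.
Qed.

Theorem theorem2 : forall phi : form,
  Sigma phi -> sentence phi -> models_S phi -> WSeq_proves phi.
Proof.
  intros phi HS Hclosed Htrue.
  pose proof (WSeq_proves_Sigma_instance phi (fun _ => sq_nil) HS (Htrue _)) as H.
  rewrite (fsubst_closed phi 0) in H; [exact H | exact Hclosed |].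
  intros k Hk. inversion Hk.
Qed.
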